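(* Let $(B,\alpha_B)$ and $(H,\alpha_H)$ be Hom-coalgebras whose structure maps are morphisms in $\overline{\mathcal H}^{i,j}(Vec_\Bbbk)$ (in particular $\alpha_B,\alpha_H$ bijective), and let $\varphi:B\otimes H\to H\otimes B$, $\varphi(b\otimes h)=\sum h^\varphi\otimes b^\varphi$, be linear with $\varphi\circ(\alpha_B\otimes\alpha_H)=(\alpha_H\otimes\alpha_B)\circ\varphi$. For $n\in\mathbb Z$ define $\ddot\varphi(n)_X:(X\otimes B)\otimes H\to(X\otimes H)\otimes B$, $(x\otimes b)\otimes h\mapsto\sum(x\otimes\alpha_H(h)^\varphi)\otimes\alpha_B^n\big((\alpha_B^{-n-1}(b))^\varphi\big)$ (where $\varphi$ is applied to $\alpha_B^{-n-1}(b)\otimes\alpha_H(h)$). Then $\ddot\varphi(n):\ddot H\ddot B\to\ddot B\ddot H$ is a comonad distributive law if and only if for all $b\in B$, $h\in H$: (M1) $((\varphi\otimes\mathrm{id}_B)\circ(\mathrm{id}_B\otimes\varphi))(\Delta_B(b)\otimes\alpha_H(h))=(\alpha_H\otimes\Delta_B)(\varphi(b\otimes h))$; (M2) $((\mathrm{id}_H\otimes\varphi)\circ(\varphi\otimes\mathrm{id}_H))(\alpha_B(b)\otimes\Delta_H(h))=(\Delta_H\otimes\alpha_B)(\varphi(b\otimes h))$; (M3) $(\varepsilon_H\otimes\mathrm{id}_B)(\varphi(b\otimes h))=\varepsilon_H(h)b$; (M4) $(\mathrm{id}_H\otimes\varepsilon_B)(\varphi(b\otimes h))=\varepsilon_B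(b)h$.
   Context: $\Bbbk$ is a field of characteristic $0$; all vector spaces finite-dimensional; $i,j$ fixed integers. $\overline{\mathcal H}^{i,j}(Vec_\Bbbk)$: objects $(X,\alpha_X)$ with $\alpha_X$ a linear automorphism; morphisms linear maps commuting with the $\alpha$'s; tensor $(X\otimes Y,\alpha_X\otimes\alpha_Y)$, unit $(\Bbbk,\mathrm{id})$; $a_{X,Y,Z}((x\otimes y)\otimes z)=\alpha_X^{i+1}(x)\otimes(y\otimes\alpha_Z^{-j-1}(z))$, $l_X(\lambda\otimes x)=\lambda\alpha_X^{j+1}(x)$, $r_X(x\otimes\lambda)=\lambda\alpha_X^{i+1}(x)$. Hom-coalgebra $(C,\alpha,\Delta,\varepsilon)$: $\varepsilon\alpha=\varepsilon$, $\alpha(c_1)\otimes\Delta(c_2)=\Delta(c_1)\otimes\alpha(c_2)$, $\varepsilon(c_1)c_2=c_1\varepsilon(c_2)=\alpha(c)$. For a Hom-coalgebra $C$, $\ddot C=-\otimes C$ is the comonad on $\overline{\mathcal H}^{i,j}(Vec_\Bbbk)$ with comultiplication $x\otimes c\mapsto(\alpha_X(x)\otimes c_1)\otimes\alpha_C^{-1}(c_2)$ and counit $x\otimes c\mapsto\varepsilon_C(c)\alpha_X^{-1}(x)$. A comonad distributive law between comonads $(F,\Delta,\varepsilon)$ and $(G,\delta,\epsilon)$ is a natural $\psi:FG\to GF$ with $G\psi\circ\psi G\circ F\delta=\delta F\circ\psi$, $\psi F\circ F\psi\circ\Delta G=G\Delta\circ\psi$, $G\varepsilon\circ\psi=\varepsilon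 G$, $\epsilon F\circ\psi=F\epsilon$. *)

(* Finite-dimensional k-vector spaces are modelled by their
   coordinate spaces 'rV[K]_n (every f.d. space is isomorphic to one); linear
   maps X -> Y are matrices acting on row vectors on the right (f x = x *m F,
   so g \o f is F *m G).  The tensor product of spaces/maps is the Kronecker
   product  A *t B  of mathcomp real_closed/mxtens.v, with row-major index
   (i,j) |-> i * n + j, so that the canonical linear identification
   (X (x) Y) (x) Z = X (x) (Y (x) Z) is exactly castmx by mulnA, and
   X (x) k = X, k (x) X = X are castmx by muln1 / mul1n. *)
From HB Require Import structures.
From mathcomp Require Import all_boot all_order all_algebra.
From mathcomp.real_closed Require Export mxtens.
Set Implicit Arguments. Unset Strict Implicit. Unset Printing Implicit Defensive.
Import Order.TTheory GRing.Theory Num.Theory.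
Local Open Scope ring_scope.

Section HomDefs.
Variable K : fieldType.

Definition mxpowz (n : nat) (A : 'M[K]_n) (z : int) : 'M[K]_n :=
  match z with
  | Posz k => iter k (mulmx A) 1%:M
  | Negz k => iter k.+1 (mulmx (invmx A)) 1%:M   (* Negz k = -(k+1) *)
  end.

(* (C, aC, D, E) is a Hom-coalgebra whose structure maps are morphisms of
   Hbar^{i,j}(Vec_k):  aC bijective, D \o aC = (aC (x) aC) \o D,
   eps \o aC = eps, alpha(c1) (x) D(c2) = D(c1) (x) alpha(c2) (under the
   canonical identification C(x)(C(x)C) = (C(x)C)(x)C),
   eps(c1) c2 = c1 eps(c2) = alpha(c). *)
Definition hom_coalgebra (c : nat) (aC : 'M[K]_c) (D : 'M[K]_(c, c * c))
    (E : 'M[K]_(c, 1)) : Prop :=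
  [/\ aC \in unitmx,
      aC *m D = D *m (aC *t aC) /\ aC *m E = E,
      castmx (erefl _, mulnA c c c) (D *m (aC *t D)) = D *m (D *t aC),
      castmx (erefl _, mul1n c) (D *m (E *t 1%:M)) = aC &
      castmx (erefl _, muln1 c) (D *m (1%:M *t E)) = aC].

(* The comonad  C.. = - (x) C  on Hbar^{i,j}(Vec_k).  An object is (m, aX)
   with aX : 'M_m invertible; C..(m, aX) = (m * c, aX *t aC); on morphisms
   f |-> f *t 1. *)
(* comultiplication at X : x (x) c |-> (aX x (x) c1) (x) aC^{-1}(c2) *)
Definition comon_delta (c : nat) (aC : 'M[K]_c) (D : 'M[K]_(c, c * c))
    (m : nat) (aX : 'M[K]_m) : 'M[K]_(m * c, m * c * c) :=
  castmx (erefl _, mulnA m c c) (aX *t (D *m (1%:M *t invmx aC))).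

Definition comon_eps (c : nat) (E : 'M[K]_(c, 1))
    (m : nat) (aX : 'M[K]_m) : 'M[K]_(m * c, m) :=
  castmx (erefl _, muln1 m) (invmx aX *t E).

(* psi : F G -> G F  is a comonad distributive law between the comonads
   F = f.. (for the Hom-coalgebra (f, aF, DF, EF)) and G = g.. (for
   (g, aG, DG, EG)).  psi m aX is the component at the object X = (m, aX),
   a linear map (X (x) g) (x) f -> (X (x) f) (x) g. *)
Definition comonad_distr_law
    (f : nat) (aF : 'M[K]_f) (DF : 'M[K]_(f, f * f)) (EF : 'M[K]_(f, 1))
    (g : nat) (aG : 'M[K]_g) (DG : 'M[K]_(g, g * g)) (EG : 'M[K]_(g, 1))
    (psi : forall m : nat, 'M[K]_m -> 'M[K]_(m * g * f, m * f * g)) : Prop :=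
  forall (m : nat) (aX : 'M[K]_m), aX \in unitmx ->
  [/\ (* the component is a morphism of Hbar^{i,j}(Vec_k), and naturality *)
      ((aX *t aG) *t aF) *m psi m aX = psi m aX *m ((aX *t aF) *t aG) /\
      (forall (m' : nat) (aY : 'M[K]_m') (u : 'M[K]_(m, m')),
         aY \in unitmx -> aX *m u = u *m aY ->
         ((u *t (1%:M : 'M[K]_g)) *t (1%:M : 'M[K]_f)) *m psi m' aY
         = psi m aX *m ((u *t (1%:M : 'M[K]_f)) *t (1%:M : 'M[K]_g))),
      (* G psi . psi G . F delta = delta F . psi *)
      (comon_delta aG DG aX *t (1%:M : 'M[K]_f)) *m psi (m * g) (aX *t aG)
         *m (psi m aX *t (1%:M : 'M[K]_g))
      = psi m aX *m comon_delta aG DG (aX *t aF),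
      (* psi F . F psi . Delta G = G Delta . psi *)
      comon_delta aF DF (aX *t aG) *m (psi m aX *t (1%:M : 'M[K]_f))
         *m psi (m * f) (aX *t aF)
      = psi m aX *m (comon_delta aF DF aX *t (1%:M : 'M[K]_g)),
      (* G eps . psi = eps G *)
      psi m aX *m (comon_eps EF aX *t (1%:M : 'M[K]_g))
      = comon_eps EF (aX *t aG) &
      (* epsilon F . psi = F epsilon *)
      psi m aX *m comon_eps EG (aX *t aF)
      = comon_eps EG aX *t (1%:M : 'M[K]_f)].

(* The local part of phi..(n)_X :
   b (x) h |-> sum alpha_H(h)^phi (x) alpha_B^n((alpha_B^{-n-1}(b))^phi),
   i.e. (id_H (x) aB^n) . phi . (aB^{-n-1} (x) aH). *)
Definition phi_twist (b h : nat) (aB : 'M[K]_b) (aH : 'M[K]_h)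
    (Phi : 'M[K]_(b * h, h * b)) (n : int) : 'M[K]_(b * h, h * b) :=
  (mxpowz aB (- n - 1) *t aH) *m Phi *m ((1%:M : 'M[K]_h) *t mxpowz aB n).

Definition ddot_phi (b h : nat) (aB : 'M[K]_b) (aH : 'M[K]_h)
    (Phi : 'M[K]_(b * h, h * b)) (n : int)
    (m : nat) (aX : 'M[K]_m) : 'M[K]_(m * b * h, m * h * b) :=
  castmx (mulnA m b h, mulnA m h b)
    ((1%:M : 'M[K]_m) *t phi_twist aB aH Phi n).

End HomDefs.

(* Every component of phi..(n) is X (x) T for one map
   T = (alpha_B^(-n-1) (x) alpha_H) phi (id (x) alpha_B^n), and each axiom of
   a comonad distributive law, evaluated at an object X, is X tensored with
   the same axiom at the unit object, up to reassociation; so phi..(n) is a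
   distributive law iff T satisfies the four axioms at the unit object.  The
   powers of alpha_B are coalgebra automorphisms commuting with alpha_B, and
   alpha_B^(-n-1) alpha_B^n = alpha_B^(-1); with the alpha-equivariance of phi
   this turns each axiom for T into the corresponding identity (M1)-(M4) for
   phi multiplied on both sides by invertible maps.  Finally, a linear map
   out of B (x) H is determined by its values on elementary tensors. *)

From HB Require Import structures.
From mathcomp Require Import all_boot all_order all_algebra.
From mathcomp.real_closed Require Import mxtens.
Set Implicit Arguments. Unset Strict Implicit. Unset Printing Implicit Defensive.
Import Order.TTheory GRing.Theory Num.Theory.
Local Open Scope ring_scope.

(* The identity matrix between two (provably equal) dimensions: it turns every
   castmx into a product, so that reassociations of tensor products can be
   rewritten like ordinary matrices. *)
Definition idmx {R : pzRingType} p q : 'M[R]_(p, q) := \matrix_(i, j) ((i : nat) == j)%:R.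

Notation rassoc m n p := (idmx (m * n * p) (m * (n * p))).
Notation lassoc m n p := (idmx (m * (n * p)) (m * n * p)).
Notation "''1_' n" := (1%:M : 'M_n) (at level 8, n at level 2, format "''1_' n").

Section TensorReassociation.
Variable R : comPzRingType.

Lemma mulmxA_eq p q r s (X : 'M[R]_(p, q)) (Y : 'M[R]_(q, r)) (W : 'M[R]_(p, r)) :
  X *m Y = W -> forall M : 'M[R]_(r, s), X *m (Y *m M) = W *m M.
Proof. by move=> eXY M; rewrite mulmxA eXY. Qed.

Lemma mulmxA_eq3 p q r r' s (X : 'M[R]_(p, q)) (Y : 'M[R]_(q, r)) (Z : 'M[R]_(r, r'))
    (W : 'M[R]_(p, r')) :
  X *m Y *m Z = W -> forall M : 'M[R]_(r', s), X *m (Y *m (Z *m M)) = W *m M.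
Proof. by move=> eXYZ M; rewrite !mulmxA eXYZ. Qed.

Lemma mulmxA_eq4 p q r r' r'' s (X : 'M[R]_(p, q)) (Y : 'M[R]_(q, r)) (Z : 'M[R]_(r, r'))
    (Z' : 'M[R]_(r', r'')) (W : 'M[R]_(p, r'')) :
  X *m Y *m Z *m Z' = W -> forall M : 'M[R]_(r'', s), X *m (Y *m (Z *m (Z' *m M))) = W *m M.
Proof. by move=> eXYZ M; rewrite !mulmxA eXYZ. Qed.

Lemma idmxE p : @idmx R p p = 1%:M.
Proof. by apply/matrixP=> i j; rewrite !mxE. Qed.

Lemma idmx_mul p q r : p = q -> @idmx R p q *m idmx q r = idmx p r.
Proof. by move=> e; subst; rewrite idmxE mul1mx. Qed.

Lemma castmx_idmx m m' n n' (e1 : m = m') (e2 : n = n') (M : 'M[R]_(m, n)) :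
  castmx (e1, e2) M = idmx m' m *m M *m idmx n n'.
Proof. by case: m' / e1; case: n' / e2; rewrite castmx_id !idmxE mul1mx mulmx1. Qed.

Lemma castmx_idmxr m n n' (e : n = n') (M : 'M[R]_(m, n)) :
  castmx (erefl m, e) M = M *m idmx n n'.
Proof. by rewrite castmx_idmx idmxE mul1mx. Qed.

Lemma idmx_cancel a c d e (A B : 'M[R]_(c, d)) : a = c -> d = e ->
  idmx a c *m A *m idmx d e = idmx a c *m B *m idmx d e -> A = B.
Proof. by move=> e1 e2; subst; rewrite !idmxE !mul1mx !mulmx1. Qed.

Lemma idmx_mul_inj a c d (A B : 'M[R]_(c, d)) : a = c ->
  idmx a c *m A = idmx a c *m B -> A = B.
Proof. by move=> e; subst; rewrite !idmxE !mul1mx. Qed.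

Lemma tensmx11 p q : '1_p *t '1_q = 1%:M :> 'M[R]_(p * q).
Proof.
apply/matrixP=> i j.
case: (mxtens_indexP i)=> i1 i2; case: (mxtens_indexP j)=> j1 j2.
rewrite tensmxE !mxE -natrM -!val_eqE /= eq_addl_mul ?ltn_ord //.
by rewrite xpair_eqE mulnb.
Qed.

Lemma tensmxA m n p q r s (A : 'M[R]_(m, n)) (B : 'M[R]_(p, q)) (C : 'M[R]_(r, s)) :
  castmx (mulnA m p r, mulnA n q s) (A *t (B *t C)) = A *t B *t C.
Proof.
apply/matrixP=> i j; rewrite castmxE.
case: (mxtens_indexP i)=> i12 i3; case: (mxtens_indexP i12)=> i1 i2.
case: (mxtens_indexP j)=> j12 j3; case: (mxtens_indexP j12)=> j1 j2.
have reassoc k l t (x : 'I_k) (y : 'I_l) (z : 'I_t) :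
    cast_ord (esym (mulnA k l t)) (mxtens_index (mxtens_index (x, y), z))
    = mxtens_index (x, mxtens_index (y, z)).
  by apply: val_inj => /=; rewrite mulnDl -mulnA addnA.
by rewrite !reassoc !tensmxE mulrA.
Qed.

Lemma tensmxA_idmx m n p q r s (A : 'M[R]_(m, n)) (B : 'M[R]_(p, q)) (C : 'M[R]_(r, s)) :
  A *t B *t C = rassoc m p r *m (A *t (B *t C)) *m lassoc n q s.
Proof. by rewrite -tensmxA castmx_idmx. Qed.

Lemma tensmxA_rassoc m n p q r s (A : 'M[R]_(m, n)) (B : 'M[R]_(p, q)) (C : 'M[R]_(r, s)) :
  A *t B *t C *m rassoc n q s = rassoc m p r *m (A *t (B *t C)).
Proof. by rewrite tensmxA_idmx -!mulmxA idmx_mul ?mulnA // idmxE mulmx1. Qed.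

Lemma tensmxA_lassoc m n p q r s (A : 'M[R]_(m, n)) (B : 'M[R]_(p, q)) (C : 'M[R]_(r, s)) :
  A *t (B *t C) *m lassoc n q s = lassoc m p r *m (A *t B *t C).
Proof. by rewrite tensmxA_idmx !mulmxA idmx_mul ?mulnA // idmxE mul1mx. Qed.

Lemma tens1mx_idmx m n (A : 'M[R]_(m, n)) :
  '1_1 *t A = idmx (1 * m) m *m A *m idmx n (1 * n).
Proof. by rewrite tens_scalar_mx scale1r castmx_idmx. Qed.

Lemma tensmx1_idmx m n (A : 'M[R]_(m, n)) :
  A *t '1_1 = idmx (m * 1) m *m A *m idmx n (n * 1).
Proof. by rewrite tens_mx_scalar scale1r castmx_idmx. Qed.

Lemma tens1mx_lunit p q (A : 'M[R]_(p, q)) :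
  '1_1 *t A *m idmx (1 * q) q = idmx (1 * p) p *m A.
Proof. by rewrite tens1mx_idmx -!mulmxA idmx_mul ?mul1n // !idmxE !mul1mx mulmx1. Qed.

Lemma tensmx1_runit p q (A : 'M[R]_(p, q)) :
  A *t '1_1 *m idmx (q * 1) q = idmx (p * 1) p *m A.
Proof. by rewrite tensmx1_idmx -!mulmxA idmx_mul ?muln1 // !idmxE !mul1mx mulmx1. Qed.

Lemma tens1mx_inj p q (A B : 'M[R]_(p, q)) :
  '1_1 *t A = '1_1 *t B -> A = B.
Proof. by rewrite !tens1mx_idmx; apply: idmx_cancel; rewrite ?mul1n. Qed.

Lemma idmx_tens1mx m x y : x = y -> @idmx R (m * x) (m * y) = '1_m *t idmx x y.
Proof. by move=> e; subst; rewrite !idmxE tensmx11. Qed.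

Lemma idmx_tensmx1 p q r s t (M : 'M[R]_(q, r)) : p = q -> r = s ->
  (idmx p q *m M *m idmx r s) *t '1_t
  = idmx (p * t) (q * t) *m (M *t 1%:M) *m idmx (r * t) (s * t).
Proof. by move=> e1 e2; subst; rewrite !idmxE !mul1mx !mulmx1. Qed.

Lemma mulmx_idmx_tensmx1 q r s t (M : 'M[R]_(q, r)) : r = s ->
  (M *m idmx r s) *t '1_t = (M *t 1%:M) *m idmx (r * t) (s * t).
Proof. by move=> e; subst; rewrite !idmxE !mulmx1. Qed.

Lemma tensmx_mulmx_idmx m p q r (X : 'M[R]_m) (Y : 'M[R]_(p, q)) : q = r ->
  X *t (Y *m idmx q r) = (X *t Y) *m idmx (m * q) (m * r).
Proof. by move=> e; subst; rewrite !idmxE !mulmx1. Qed.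

Lemma tensmx_row_eqP p q r (A B : 'M[R]_(p * q, r)) :
  (forall (x : 'rV[R]_p) (y : 'rV[R]_q), (x *t y) *m A = (x *t y) *m B) <-> A = B.
Proof.
split=> [eqAB|-> //]; apply/row_matrixP=> k; rewrite !rowE.
case: (mxtens_indexP k)=> i j.
have <- : (delta_mx 0 i *t delta_mx 0 j : 'M[R]_(1 * 1, p * q))
          = delta_mx 0 (mxtens_index (i, j)); last exact: eqAB.
apply/matrixP=> r0 c; case: (mxtens_indexP c)=> c1 c2; case: (mxtens_indexP r0)=> r1 r2.
rewrite tensmxE !mxE [r1]ord1 [r2]ord1 -!val_eqE /= eq_addl_mul ?ltn_ord // -natrM.
by rewrite xpair_eqE mulnb.
Qed.

Lemma scale_row_counitr p q (x : 'rV[R]_p) (y : 'rV[R]_q) (E : 'M[R]_(q, 1)) :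
  (y *m E) 0 0 *: x = (x *t y) *m (('1_p *t E) *m idmx (p * 1) p).
Proof.
rewrite mulmxA tensmx_mul mulmx1 [y *m E]mx11_scalar tens_mx_scalar castmx_idmx.
by rewrite -!mulmxA idmx_mul ?muln1 // !idmxE mulmx1 mul1mx mxE eqxx mulr1n.
Qed.

Lemma scale_row_counitl p q (x : 'rV[R]_p) (y : 'rV[R]_q) (E : 'M[R]_(p, 1)) :
  (x *m E) 0 0 *: y = (x *t y) *m ((E *t '1_q) *m idmx (1 * q) q).
Proof.
rewrite mulmxA tensmx_mul mulmx1 [x *m E]mx11_scalar tens_scalar_mx castmx_idmx.
by rewrite -!mulmxA idmx_mul ?mul1n // !idmxE mulmx1 mul1mx mxE eqxx mulr1n.
Qed.

End TensorReassociation.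

Section TensorUnits.
Variable R : comUnitRingType.

Lemma mulmx_units_eqP p q (U : 'M[R]_p) (V : 'M[R]_q) (X Y : 'M[R]_(p, q)) :
  U \in unitmx -> V \in unitmx -> U *m X *m V = U *m Y *m V <-> X = Y.
Proof.
move=> uU uV; split=> [eqUV|-> //].
have := congr1 (fun Z => invmx U *m Z *m invmx V) eqUV.
by rewrite !mulmxA !mulmxK // !mulVmx // !mul1mx.
Qed.

Lemma tensmxV_mul m p (A : 'M[R]_m) (B : 'M[R]_p) : A \in unitmx -> B \in unitmx ->
  (invmx A *t invmx B) *m (A *t B) = 1%:M.
Proof. by move=> uA uB; rewrite tensmx_mul !mulVmx // tensmx11. Qed.

Lemma unitmx_tens m p (A : 'M[R]_m) (B : 'M[R]_p) : A \in unitmx -> B \in unitmx ->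
  A *t B \in unitmx.
Proof. by move=> uA uB; case: (mulmx1_unit (tensmxV_mul uA uB)). Qed.

Lemma invmx_tens m p (A : 'M[R]_m) (B : 'M[R]_p) : A \in unitmx -> B \in unitmx ->
  invmx (A *t B) = invmx A *t invmx B.
Proof.
move=> uA uB; rewrite -[LHS]mul1mx -(tensmxV_mul uA uB) -mulmxA.
by rewrite mulmxV ?mulmx1 // unitmx_tens.
Qed.

End TensorUnits.

Lemma iter_mulmx_expr (R : pzRingType) m (A : 'M[R]_m) k :
  iter k (mulmx A) 1%:M = A ^+ k.
Proof. by elim: k => // k IH; rewrite iterS IH exprS mulmxE. Qed.

Section CoalgebraAutomorphisms.
Variables (R : comUnitRingType) (b : nat) (aB : 'M[R]_b).
Variables (DB : 'M[R]_(b, b * b)) (EB : 'M[R]_(b, 1)).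
Hypotheses (uB : aB \in unitmx) (hDB : aB *m DB = DB *m (aB *t aB)) (hEB : aB *m EB = EB).

Definition coalg_aut (X : 'M[R]_b) :=
  [/\ X \in unitmx, X *m aB = aB *m X, X *m DB = DB *m (X *t X) & X *m EB = EB].

Lemma coalg_aut1 : coalg_aut 1%:M.
Proof. by split; rewrite ?unitmx1 ?mul1mx ?mulmx1 ?tensmx11 ?mulmx1. Qed.

Lemma coalg_aut_alpha : coalg_aut aB.
Proof. by []. Qed.

Lemma coalg_aut_commV X : coalg_aut X -> X *m invmx aB = invmx aB *m X.
Proof.
case=> _ cX _ _; rewrite -[LHS]mul1mx -(mulVmx uB) -mulmxA (mulmxA aB) -cX.
by rewrite !mulmxA mulmxK.
Qed.

Lemma coalg_autM X Y : coalg_aut X -> coalg_aut Y -> coalg_aut (X *m Y).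
Proof.
case=> uX cX dX eX [uY cY dY eY]; split.
- by rewrite unitmx_mul uX uY.
- by rewrite -mulmxA cY !mulmxA cX.
- by rewrite -mulmxA dY mulmxA dX -mulmxA tensmx_mul.
- by rewrite -mulmxA eY eX.
Qed.

Lemma coalg_autV X : coalg_aut X -> coalg_aut (invmx X).
Proof.
case=> uX cX dX eX; have uXX := unitmx_tens uX uX; have iXX := invmx_tens uX uX.
split.
- by rewrite unitmx_inv.
- rewrite -[LHS]mulmx1 -(mulmxV uX) mulmxA -(mulmxA _ aB) -cX.
  by rewrite mulmxA mulVmx // mul1mx.
- rewrite -[LHS]mulmx1 -(mulmxV uXX) mulmxA -(mulmxA _ DB) -dX.
  by rewrite mulmxA mulVmx // mul1mx iXX.
- by rewrite -{1}eX mulKmx.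
Qed.

Lemma coalg_autX X k : coalg_aut X -> coalg_aut (X ^+ k).
Proof.
move=> aX; elim: k => [|k IH]; first exact: coalg_aut1.
by rewrite exprS -mulmxE; apply: coalg_autM.
Qed.

End CoalgebraAutomorphisms.

Section Powers.
Variables (K : fieldType) (b : nat) (aB : 'M[K]_b).
Variables (DB : 'M[K]_(b, b * b)) (EB : 'M[K]_(b, 1)).
Hypotheses (uB : aB \in unitmx) (hDB : aB *m DB = DB *m (aB *t aB)) (hEB : aB *m EB = EB).

Lemma coalg_aut_mxpowz z : coalg_aut aB DB EB (mxpowz aB z).
Proof.
case: z => k; rewrite /mxpowz iter_mulmx_expr; apply: coalg_autX => //.
exact/coalg_autV/coalg_aut_alpha.
Qed.

Lemma mxpowz_twist n :
  mxpowz aB (- n - 1) *m mxpowz aB n = invmx aB /\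
  mxpowz aB n *m mxpowz aB (- n - 1) = invmx aB.
Proof.
have cVB : GRing.comm (invmx aB) aB by rewrite /GRing.comm -!mulmxE mulVmx ?mulmxV.
have VBX k : invmx aB ^+ k *m aB ^+ k = 1%:M.
  by rewrite mulmxE -exprMn_comm // -mulmxE mulVmx // expr1n.
have BVX k : aB ^+ k *m invmx aB ^+ k = 1%:M.
  by rewrite mulmxE -exprMn_comm // -mulmxE mulmxV // expr1n.
have VBSX k : invmx aB ^+ k.+1 *m aB ^+ k = invmx aB.
  by rewrite exprS -mulmxE -mulmxA VBX mulmx1.
have BVSX k : aB ^+ k *m invmx aB ^+ k.+1 = invmx aB.
  by rewrite exprSr -mulmxE mulmxA BVX mul1mx.
case: n => k.
- have -> : - Posz k - 1 = Negz k by rewrite NegzE -addn1 PoszD opprD.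
  by rewrite /mxpowz !iter_mulmx_expr.
- have -> : - Negz k - 1 = Posz k by rewrite NegzE opprK -addn1 PoszD addrK.
  by rewrite /mxpowz !iter_mulmx_expr.
Qed.

End Powers.

Section TensoredComponents.
Variables (K : comPzRingType) (b h : nat) (T : 'M[K]_(b * h, h * b)) (m : nat).

Local Notation psi k := (rassoc k b h *m ('1_k *t T) *m lassoc k h b).

Local Ltac dims := by rewrite ?mulnA ?muln1 ?mul1n.

Lemma psi_morph_tens (X : 'M[K]_m) (B : 'M[K]_b) (H : 'M[K]_h) :
  (B *t H) *m T = T *m (H *t B) -> (X *t B *t H) *m psi m = psi m *m (X *t H *t B).
Proof.
move=> eT; rewrite !tensmxA_idmx -!mulmxA !(mulmxA_eq (@idmx_mul K _ _ _ _)); try dims.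
rewrite !idmxE !mul1mx !(mulmxA_eq (tensmx_mul _ _ _ _)) mul1mx mulmx1 eT.
all: by rewrite -?mulmxA.
Qed.

Lemma psi_natural m' (u : 'M[K]_(m, m')) :
  (u *t '1_b *t '1_h) *m psi m' = psi m *m (u *t '1_h *t '1_b).
Proof.
rewrite !tensmxA_idmx -!mulmxA !(mulmxA_eq (@idmx_mul K _ _ _ _)); try dims.
rewrite !idmxE !mul1mx !(mulmxA_eq (tensmx_mul _ _ _ _)) !mul1mx !mulmx1 !tensmx11.
by rewrite mul1mx mulmx1 -?mulmxA.
Qed.

Lemma comulB_lhs_tens (X : 'M[K]_m) (D : 'M[K]_(b, b * b)) :
  ((X *t D) *m lassoc m b b) *t '1_h *m psi (m * b) *m (psi m *t '1_b)
  = rassoc m b h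
    *m (X *t ((D *t '1_h) *m rassoc b b h *m ('1_b *t T) *m lassoc b h b *m (T *t '1_b)))
    *m idmx (m * (h * b * b)) (m * h * b * b).
Proof.
rewrite idmx_tensmx1 ?mulmx_idmx_tensmx1; try dims.
rewrite -(@tensmx11 K m b) !tensmxA_idmx -!mulmxA.
rewrite !(mulmxA_eq (@idmx_mul K _ _ _ _)) ?(@idmx_mul K _ _ _ _); try dims.
rewrite !(@idmx_tens1mx K m); try dims.
by rewrite !(mulmxA_eq (tensmx_mul _ _ _ _)) !mulmx1 -?mulmxA.
Qed.

Lemma comulB_rhs_tens (X : 'M[K]_m) (H : 'M[K]_h) (D : 'M[K]_(b, b * b)) :
  psi m *m ((X *t H *t D) *m idmx (m * h * (b * b)) (m * h * b * b))
  = rassoc m b h *m (X *t (T *m (H *t D) *m lassoc h b b))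
    *m idmx (m * (h * b * b)) (m * h * b * b).
Proof.
rewrite tensmxA_idmx tensmx_mulmx_idmx -?mulmxA; try dims.
rewrite !(mulmxA_eq (@idmx_mul K _ _ _ _)) ?(@idmx_mul K _ _ _ _); try dims.
by rewrite idmxE mul1mx (mulmxA_eq (tensmx_mul _ _ _ _)) mul1mx.
Qed.

Lemma comulH_lhs_tens (X : 'M[K]_m) (B : 'M[K]_b) (E : 'M[K]_(h, h * h)) :
  ((X *t B *t E) *m idmx (m * b * (h * h)) (m * b * h * h)) *m (psi m *t '1_h) *m psi (m * h)
  = rassoc m b h
    *m (X *t ((B *t E) *m lassoc b h h *m (T *t '1_h) *m rassoc h b h *m ('1_h *t T)))
    *m idmx (m * (h * (h * b))) (m * h * h * b).
Proof.
rewrite idmx_tensmx1; try dims.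
rewrite -(@tensmx11 K m h) !tensmxA_idmx -!mulmxA.
rewrite !(mulmxA_eq (@idmx_mul K _ _ _ _)) ?(@idmx_mul K _ _ _ _); try dims.
rewrite !(@idmx_tens1mx K m); try dims.
by rewrite !(mulmxA_eq (tensmx_mul _ _ _ _)) !mulmx1 -?mulmxA.
Qed.

Lemma comulH_rhs_tens (X : 'M[K]_m) (E : 'M[K]_(h, h * h)) :
  psi m *m (((X *t E) *m lassoc m h h) *t '1_b)
  = rassoc m b h *m (X *t (T *m (E *t '1_b) *m rassoc h h b))
    *m idmx (m * (h * (h * b))) (m * h * h * b).
Proof.
rewrite mulmx_idmx_tensmx1 ?tensmxA_idmx ?tensmx_mulmx_idmx -?mulmxA; try dims.
rewrite !(mulmxA_eq (@idmx_mul K _ _ _ _)) ?(@idmx_mul K _ _ _ _); try dims.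
rewrite idmxE mul1mx (mulmxA_eq (tensmx_mul _ _ _ _)) mul1mx.
all: by rewrite -?mulmxA.
Qed.

Lemma counitH_lhs_tens (X : 'M[K]_m) (E : 'M[K]_(h, 1)) :
  psi m *m (((X *t E) *m idmx (m * 1) m) *t '1_b)
  = rassoc m b h *m (X *t (T *m (E *t '1_b) *m idmx (1 * b) b)).
Proof.
rewrite mulmx_idmx_tensmx1 ?tensmxA_idmx ?tensmx_mulmx_idmx -?mulmxA; try dims.
rewrite !(mulmxA_eq (@idmx_mul K _ _ _ _)) ?(@idmx_mul K _ _ _ _); try dims.
rewrite idmxE mul1mx (mulmxA_eq (tensmx_mul _ _ _ _)) mul1mx.
all: by rewrite -?mulmxA.
Qed.

Lemma counitH_rhs_tens (X : 'M[K]_m) (B : 'M[K]_b) (E : 'M[K]_(h, 1)) :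
  (X *t B *t E) *m idmx (m * b * 1) (m * b)
  = rassoc m b h *m (X *t ((B *t E) *m idmx (b * 1) b)).
Proof.
rewrite tensmxA_idmx tensmx_mulmx_idmx -?mulmxA ?(@idmx_mul K _ _ _ _); try dims.
all: by rewrite -?mulmxA.
Qed.

Lemma counitB_lhs_tens (X : 'M[K]_m) (H : 'M[K]_h) (E : 'M[K]_(b, 1)) :
  psi m *m ((X *t H *t E) *m idmx (m * h * 1) (m * h))
  = rassoc m b h *m (X *t (T *m (H *t E) *m idmx (h * 1) h)).
Proof.
rewrite tensmxA_idmx tensmx_mulmx_idmx -?mulmxA; try dims.
rewrite !(mulmxA_eq (@idmx_mul K _ _ _ _)) ?(@idmx_mul K _ _ _ _); try dims.
rewrite idmxE mul1mx (mulmxA_eq (tensmx_mul _ _ _ _)) mul1mx.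
all: by rewrite -?mulmxA.
Qed.

Lemma counitB_rhs_tens (X : 'M[K]_m) (E : 'M[K]_(b, 1)) :
  ((X *t E) *m idmx (m * 1) m) *t '1_h
  = rassoc m b h *m (X *t ((E *t '1_h) *m idmx (1 * h) h)).
Proof.
rewrite mulmx_idmx_tensmx1 ?tensmxA_idmx ?tensmx_mulmx_idmx -?mulmxA; try dims.
rewrite !(@idmx_mul K _ _ _ _); try dims.
all: by rewrite -?mulmxA.
Qed.

End TensoredComponents.

Section TensoredDistrLaw.
Variables (K : fieldType) (b h : nat).
Variables (aB : 'M[K]_b) (DB : 'M[K]_(b, b * b)) (EB : 'M[K]_(b, 1)).
Variables (aH : 'M[K]_h) (DH : 'M[K]_(h, h * h)) (EH : 'M[K]_(h, 1)).

Local Notation DB' := (DB *m ('1_b *t invmx aB)).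
Local Notation DH' := (DH *m ('1_h *t invmx aH)).

(* The axioms of comonad_distr_law at the unit object (1, 1), with the
   unitors stripped off. *)
Definition distr_law_at_unit (T : 'M[K]_(b * h, h * b)) :=
  [/\ (DB' *t '1_h) *m rassoc b b h *m ('1_b *t T) *m lassoc b h b *m (T *t '1_b)
        = T *m (aH *t DB') *m lassoc h b b,
      (aB *t DH') *m lassoc b h h *m (T *t '1_h) *m rassoc h b h *m ('1_h *t T)
        = T *m (DH' *t '1_b) *m rassoc h h b,
      T *m (EH *t '1_b) *m idmx (1 * b) b = (invmx aB *t EH) *m idmx (b * 1) b &
      T *m (invmx aH *t EB) *m idmx (h * 1) h = (EB *t '1_h) *m idmx (1 * h) h].

(* (M1)-(M4) as identities between linear maps. *)
Definition hom_coalg_distr_law (Phi : 'M[K]_(b * h, h * b)) :=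
  [/\ (DB *t aH) *m rassoc b b h *m ('1_b *t Phi) *m lassoc b h b *m (Phi *t '1_b)
        = Phi *m (aH *t DB) *m lassoc h b b,
      (aB *t DH) *m lassoc b h h *m (Phi *t '1_h) *m rassoc h b h *m ('1_h *t Phi)
        *m lassoc h h b = Phi *m (DH *t aB),
      Phi *m (EH *t '1_b) *m idmx (1 * b) b = ('1_b *t EH) *m idmx (b * 1) b &
      Phi *m ('1_h *t EB) *m idmx (h * 1) h = (EB *t '1_h) *m idmx (1 * h) h].

Lemma tensored_distr_lawP (T : 'M[K]_(b * h, h * b)) :
  aB \in unitmx -> aH \in unitmx -> (aB *t aH) *m T = T *m (aH *t aB) ->
  comonad_distr_law aH DH EH aB DB EB
    (fun m _ => castmx (mulnA m b h, mulnA m h b) ('1_m *t T))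
  <-> distr_law_at_unit T.
Proof.
move=> uB uH eT; rewrite /comonad_distr_law /comon_delta /comon_eps; split.
- move=> /(_ 1%N 1%:M (unitmx1 _ _)) [_ C1 C2 C3 C4].
  move: C1 C2 C3 C4; rewrite !castmx_idmxr !castmx_idmx !invmx_tens ?unitmx1 // invmx1.
  rewrite comulB_lhs_tens comulB_rhs_tens comulH_lhs_tens comulH_rhs_tens.
  rewrite counitH_lhs_tens counitH_rhs_tens counitB_lhs_tens counitB_rhs_tens.
  move=> C1 C2 C3 C4; split; apply: tens1mx_inj.
  + by apply: (idmx_cancel _ _ C1); rewrite !mulnA.
  + by apply: (idmx_cancel _ _ C2); rewrite !mulnA.
  + by apply: (idmx_mul_inj _ C3); rewrite !mulnA.
  + by apply: (idmx_mul_inj _ C4); rewrite !mulnA.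
- case=> C1 C2 C3 C4 m aX uX; rewrite !castmx_idmxr !castmx_idmx.
  split; first split.
  + exact: psi_morph_tens.
  + by move=> m' aY u _ _; rewrite castmx_idmx psi_natural.
  + by rewrite comulB_lhs_tens comulB_rhs_tens C1.
  + by rewrite comulH_lhs_tens comulH_rhs_tens C2.
  + by rewrite !invmx_tens // counitH_lhs_tens counitH_rhs_tens C3.
  + by rewrite !invmx_tens // counitB_lhs_tens counitB_rhs_tens C4.
Qed.

End TensoredDistrLaw.

Section Twist.
Variables (K : fieldType) (b h : nat).
Variables (aB : 'M[K]_b) (DB : 'M[K]_(b, b * b)) (EB : 'M[K]_(b, 1)).
Variables (aH : 'M[K]_h) (DH : 'M[K]_(h, h * h)) (EH : 'M[K]_(h, 1)).
Variables (Phi : 'M[K]_(b * h, h * b)) (P Q : 'M[K]_b).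
Hypotheses (uB : aB \in unitmx) (uH : aH \in unitmx).
Hypotheses (hDB : aB *m DB = DB *m (aB *t aB)) (hEB : aB *m EB = EB).
Hypotheses (hDH : aH *m DH = DH *m (aH *t aH)) (hEH : aH *m EH = EH).
Hypothesis hPhi : (aB *t aH) *m Phi = Phi *m (aH *t aB).
Hypotheses (gP : coalg_aut aB DB EB P) (gQ : coalg_aut aB DB EB Q).
Hypotheses (PQ : P *m Q = invmx aB) (QP : Q *m P = invmx aB).

Local Notation T := ((P *t aH) *m Phi *m ('1_h *t Q)).
Local Notation R := (P *m invmx aB).
Local Notation S := (aB *m Q).
Local Notation DB' := (DB *m ('1_b *t invmx aB)).
Local Notation DH' := (DH *m ('1_h *t invmx aH)).

Let uP : P \in unitmx. Proof. by case: gP. Qed.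
Let uQ : Q \in unitmx. Proof. by case: gQ. Qed.
Let gR : coalg_aut aB DB EB R.
Proof. exact/(coalg_autM gP)/coalg_autV/coalg_aut_alpha. Qed.
Let gS : coalg_aut aB DB EB S.
Proof. exact/coalg_autM/gQ/coalg_aut_alpha. Qed.
Let uR1 : R *t '1_h \in unitmx.
Proof. by apply: unitmx_tens; [case: gR | exact: unitmx1]. Qed.

Lemma twist_alt : T = (R *t '1_h) *m Phi *m (aH *t S).
Proof.
have eHS : aH *t S = (aH *t aB) *m ('1_h *t Q) by rewrite tensmx_mul mulmx1.
have rb : R *m aB = P by rewrite -mulmxA mulVmx // mulmx1.
symmetry; rewrite eHS mulmxA -(mulmxA _ Phi) -hPhi mulmxA tensmx_mul.
by rewrite rb mul1mx.
Qed.

Lemma twist_morph : (aB *t aH) *m T = T *m (aH *t aB).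
Proof.
have [_ bP _ _] := gP; have [_ bQ _ _] := gQ.
rewrite !mulmxA tensmx_mul -bP -tensmx_mul.
rewrite -(mulmxA _ (aB *t aH)) hPhi -!mulmxA tensmx_mul tensmx_mul.
by rewrite mul1mx mulmx1 bQ.
Qed.

Lemma twist_counitHP :
  T *m (EH *t '1_b) *m idmx (1 * b) b = (invmx aB *t EH) *m idmx (b * 1) b <->
  Phi *m (EH *t '1_b) *m idmx (1 * b) b = ('1_b *t EH) *m idmx (b * 1) b.
Proof.
have e1 : T *m (EH *t '1_b) *m idmx (1 * b) b
   = (P *t aH) *m (Phi *m (EH *t '1_b) *m idmx (1 * b) b) *m Q.
  rewrite -!mulmxA; congr (_ *m (_ *m _)).
  rewrite !mulmxA tensmx_mul mul1mx mulmx1.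
  rewrite -[EH in LHS]mulmx1 -[Q in LHS]mul1mx -tensmx_mul.
  by rewrite -!mulmxA tens1mx_lunit.
have e2 : (invmx aB *t EH) *m idmx (b * 1) b
   = (P *t aH) *m (('1_b *t EH) *m idmx (b * 1) b) *m Q.
  by rewrite -!mulmxA -tensmx1_runit !mulmxA !tensmx_mul !mulmx1 PQ hEH.
rewrite e1 e2; apply: mulmx_units_eqP => //; exact: unitmx_tens.
Qed.

Lemma twist_counitBP :
  T *m (invmx aH *t EB) *m idmx (h * 1) h = (EB *t '1_h) *m idmx (1 * h) h <->
  Phi *m ('1_h *t EB) *m idmx (h * 1) h = (EB *t '1_h) *m idmx (1 * h) h.
Proof.
have [_ _ _ eP] := gP; have [_ _ _ eQ] := gQ.
have e1 : T *m (invmx aH *t EB) *m idmx (h * 1) h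
   = (P *t aH) *m (Phi *m ('1_h *t EB) *m idmx (h * 1) h) *m invmx aH.
  by rewrite -!mulmxA -tensmx1_runit !(mulmxA_eq (tensmx_mul _ _ _ _)) mul1mx mulmx1 eQ.
have e2 : (EB *t '1_h) *m idmx (1 * h) h
   = (P *t aH) *m ((EB *t '1_h) *m idmx (1 * h) h) *m invmx aH.
  by rewrite -!mulmxA -tens1mx_lunit !(mulmxA_eq (tensmx_mul _ _ _ _)) !mulmx1 ?mul1mx eP ?mulmxV.
rewrite e1 {1}e2; apply: mulmx_units_eqP => //; [exact: unitmx_tens | by rewrite unitmx_inv].
Qed.

Lemma twist_comulB_lhs :
  (DB' *t '1_h) *m rassoc b b h *m ('1_b *t T) *m lassoc b h b *m (T *t '1_b)
  = (R *t '1_h)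
    *m ((DB *t aH) *m rassoc b b h *m ('1_b *t Phi) *m lassoc b h b *m (Phi *t '1_b))
    *m ((aH *t S) *t Q).
Proof.
have iP := coalg_aut_commV uB gP; have [_ _ dR _] := gR.
have ea : '1_b *t T = ('1_b *t (P *t aH)) *m ('1_b *t Phi) *m ('1_b *t ('1_h *t Q)).
  by rewrite !tensmx_mul !mul1mx.
have eb : T *t '1_b = ((R *t '1_h) *t '1_b) *m (Phi *t '1_b) *m ((aH *t S) *t '1_b).
  by rewrite !tensmx_mul !mul1mx twist_alt.
have s1 : ('1_b *t ('1_h *t Q)) *m lassoc b h b *m ((R *t '1_h) *t '1_b)
          = (R *t ('1_h *t Q)) *m lassoc b h b.
  by rewrite !tensmxA_lassoc -mulmxA !tensmx_mul !mul1mx !mulmx1.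
have s2 : ('1_b *t Phi) *m (R *t ('1_h *t Q))
          = (R *t '1_(b * h)) *m ('1_b *t (Phi *m ('1_h *t Q))).
  by rewrite !tensmx_mul !mul1mx mulmx1.
have s3 : rassoc b b h *m ('1_b *t (P *t aH)) *m (R *t '1_(b * h))
          = ((R *t P) *t aH) *m rassoc b b h.
  by rewrite tensmxA_rassoc -mulmxA tensmx_mul mul1mx mulmx1.
have s4 : (DB' *t '1_h) *m ((R *t P) *t aH) = (R *t '1_h) *m (DB *t aH).
  by rewrite !tensmx_mul !mul1mx -mulmxA tensmx_mul mul1mx -iP dR.
have s5 : ('1_b *t (Phi *m ('1_h *t Q)))
            *m (lassoc b h b *m ((Phi *t '1_b) *m ((aH *t S) *t '1_b)))
          = ('1_b *t Phi) *m (lassoc b h b *m ((Phi *t '1_b) *m ((aH *t S) *t Q))).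
  have -> : '1_b *t (Phi *m ('1_h *t Q)) = ('1_b *t Phi) *m ('1_b *t ('1_h *t Q)).
    by rewrite tensmx_mul mul1mx.
  rewrite -!mulmxA (mulmxA_eq (tensmxA_lassoc _ _ _)) -!mulmxA !tensmx_mul.
  by rewrite tensmx11 !mul1mx !mulmx1.
rewrite ea eb -!mulmxA (mulmxA_eq3 s1) -!mulmxA (mulmxA_eq s2) -!mulmxA.
by rewrite (mulmxA_eq3 s3) -!mulmxA (mulmxA_eq s4) -!mulmxA s5.
Qed.

Lemma twist_comulB_rhs :
  T *m (aH *t DB') *m lassoc h b b
  = (R *t '1_h) *m (Phi *m (aH *t DB) *m lassoc h b b) *m ((aH *t S) *t Q).
Proof.
have iQ := coalg_aut_commV uB gQ; have [_ _ dS _] := gS.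
have sD : S *m DB' = DB *m (S *t Q).
  rewrite mulmxA dS -mulmxA tensmx_mul mulmx1 -(mulmxA aB) iQ.
  by rewrite (mulmxA aB) mulmxV // mul1mx.
by rewrite twist_alt -!mulmxA -tensmxA_lassoc !(mulmxA_eq (tensmx_mul _ _ _ _)) sD.
Qed.

Lemma twist_comulBP :
  (DB' *t '1_h) *m rassoc b b h *m ('1_b *t T) *m lassoc b h b *m (T *t '1_b)
    = T *m (aH *t DB') *m lassoc h b b <->
  (DB *t aH) *m rassoc b b h *m ('1_b *t Phi) *m lassoc b h b *m (Phi *t '1_b)
    = Phi *m (aH *t DB) *m lassoc h b b.
Proof.
rewrite twist_comulB_lhs twist_comulB_rhs; apply: mulmx_units_eqP => //.
by rewrite !unitmx_tens //; case: gS.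
Qed.

Lemma twist_comulH_lhs :
  (aB *t DH') *m lassoc b h h *m (T *t '1_h) *m rassoc h b h *m ('1_h *t T)
  = (R *t '1_h)
    *m ((aB *t DH) *m lassoc b h h *m (Phi *t '1_h) *m rassoc h b h *m ('1_h *t Phi))
    *m (aH *t ('1_h *t Q)).
Proof.
have [_ bR _ _] := gR.
have ea : '1_h *t T = ('1_h *t (P *t aH)) *m ('1_h *t Phi) *m ('1_h *t ('1_h *t Q)).
  by rewrite !tensmx_mul !mul1mx.
have eb : T *t '1_h = ((R *t '1_h) *t '1_h) *m (Phi *t '1_h) *m ((aH *t S) *t '1_h).
  by rewrite !tensmx_mul !mul1mx twist_alt.
have ec : aB *t DH' = (aB *t DH) *m ('1_b *t ('1_h *t invmx aH)).
  by rewrite tensmx_mul mulmx1.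
have t1 : ('1_b *t ('1_h *t invmx aH)) *m lassoc b h h *m ((R *t '1_h) *t '1_h)
          = (R *t ('1_h *t '1_h)) *m lassoc b h h *m (('1_b *t '1_h) *t invmx aH).
  by rewrite !tensmxA_lassoc -!mulmxA !tensmx_mul !mul1mx !mulmx1.
have t2 : (aB *t DH) *m (R *t ('1_h *t '1_h)) = (R *t '1_h) *m (aB *t DH).
  by rewrite !tensmx_mul tensmx11 mulmx1 mul1mx bR.
have t3 : (('1_b *t '1_h) *t invmx aH) *m (Phi *t '1_h)
          = (Phi *t '1_h) *m (('1_h *t '1_b) *t invmx aH).
  by rewrite !tensmx_mul !tensmx11 mulmx1 !mul1mx mulmx1.
have SP : S *m P = 1%:M by rewrite -mulmxA QP mulmxV.
have t4 : (('1_h *t '1_b) *t invmx aH) *m ((aH *t S) *t '1_h) *m rassoc h b h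
            *m ('1_h *t (P *t aH))
          = rassoc h b h *m (aH *t '1_(b * h)).
  rewrite tensmx_mul tensmx11 mul1mx mulmx1 tensmxA_rassoc -mulmxA !tensmx_mul.
  by rewrite !mulmx1 SP mulVmx // tensmx11.
have t5 : (aH *t '1_(b * h)) *m (('1_h *t Phi) *m ('1_h *t ('1_h *t Q)))
          = ('1_h *t Phi) *m (aH *t ('1_h *t Q)).
  by rewrite !tensmx_mul !mul1mx !mulmx1.
rewrite ea eb ec -!mulmxA (mulmxA_eq3 t1) -!mulmxA (mulmxA_eq t2) -!mulmxA.
by rewrite (mulmxA_eq t3) -!mulmxA (mulmxA_eq4 t4) -!mulmxA t5.
Qed.

Lemma twist_comulH_rhs :
  T *m (DH' *t '1_b) *m rassoc h h b
  = (R *t '1_h) *m (Phi *m (DH *t aB) *m rassoc h h b) *m (aH *t ('1_h *t Q)).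
Proof.
have hDH' : aH *m DH' = DH *m (aH *t '1_h).
  by rewrite mulmxA hDH -mulmxA tensmx_mul mulmx1 mulmxV.
rewrite twist_alt -!mulmxA -tensmxA_rassoc !(mulmxA_eq (tensmx_mul _ _ _ _)) hDH'.
by rewrite mulmx1.
Qed.

Lemma twist_comulHP :
  (aB *t DH') *m lassoc b h h *m (T *t '1_h) *m rassoc h b h *m ('1_h *t T)
    = T *m (DH' *t '1_b) *m rassoc h h b <->
  (aB *t DH) *m lassoc b h h *m (Phi *t '1_h) *m rassoc h b h *m ('1_h *t Phi)
    *m lassoc h h b = Phi *m (DH *t aB).
Proof.
have uHQ : aH *t ('1_h *t Q) \in unitmx by rewrite !unitmx_tens ?unitmx1.
have assocK : lassoc h h b *m rassoc h h b = '1_(h * (h * b)) :> 'M[K]_(_, _) /\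
              rassoc h h b *m lassoc h h b = '1_(h * h * b) :> 'M[K]_(_, _).
  by split; rewrite idmx_mul ?mulnA // idmxE.
rewrite twist_comulH_lhs twist_comulH_rhs; split=> [|<-].
  by move/(mulmx_units_eqP _ _ uR1 uHQ)->; rewrite -(mulmxA (Phi *m _)) assocK.2 mulmx1.
by rewrite -[_ *m lassoc h h b *m _]mulmxA assocK.1 mulmx1.
Qed.

Lemma twist_distr_law_at_unitP :
  distr_law_at_unit aB DB EB aH DH EH T <-> hom_coalg_distr_law aB DB EB aH DH EH Phi.
Proof.
split=> -[C1 C2 C3 C4].
- by split; [apply/twist_comulBP | apply/twist_comulHP | apply/twist_counitHP
            | apply/twist_counitBP].
- by split; [apply/twist_comulBP | apply/twist_comulHP | apply/twist_counitHP
            | apply/twist_counitBP].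
Qed.

End Twist.

Lemma hom_coalg_distr_law_rowP (K : fieldType) (b h : nat)
    (aB : 'M[K]_b) (DB : 'M[K]_(b, b * b)) (EB : 'M[K]_(b, 1))
    (aH : 'M[K]_h) (DH : 'M[K]_(h, h * h)) (EH : 'M[K]_(h, 1))
    (Phi : 'M[K]_(b * h, h * b)) :
  hom_coalg_distr_law aB DB EB aH DH EH Phi <->
  [/\ forall (bv : 'rV[K]_b) (hv : 'rV[K]_h),
         castmx (erefl _, mulnA b h b)
           (castmx (erefl _, esym (mulnA b b h)) ((bv *m DB) *t (hv *m aH))
              *m ('1_b *t Phi))
           *m (Phi *t '1_b)
         = castmx (erefl _, mulnA h b b) ((bv *t hv) *m Phi *m (aH *t DB)),
       forall (bv : 'rV[K]_b) (hv : 'rV[K]_h),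
         castmx (erefl _, mulnA h h b)
           (castmx (erefl _, esym (mulnA h b h))
              (castmx (erefl _, mulnA b h h) ((bv *m aB) *t (hv *m DH))
                 *m (Phi *t '1_h))
            *m ('1_h *t Phi))
         = (bv *t hv) *m Phi *m (DH *t aB),
       forall (bv : 'rV[K]_b) (hv : 'rV[K]_h),
         castmx (erefl _, mul1n b) ((bv *t hv) *m Phi *m (EH *t '1_b))
         = (hv *m EH) 0 0 *: bv &
       forall (bv : 'rV[K]_b) (hv : 'rV[K]_h),
         castmx (erefl _, muln1 h) ((bv *t hv) *m Phi *m ('1_h *t EB))
         = (bv *m EB) 0 0 *: hv].
Proof.
split=> -[C1 C2 C3 C4]; split.
- move=> bv hv; move: (congr1 (mulmx (bv *t hv)) C1).
  by rewrite !castmx_idmxr -tensmx_mul -!mulmxA.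
- move=> bv hv; move: (congr1 (mulmx (bv *t hv)) C2).
  by rewrite !castmx_idmxr -tensmx_mul -!mulmxA.
- move=> bv hv; move: (congr1 (mulmx (bv *t hv)) C3).
  by rewrite scale_row_counitr !castmx_idmxr -!mulmxA.
- move=> bv hv; move: (congr1 (mulmx (bv *t hv)) C4).
  by rewrite scale_row_counitl !castmx_idmxr -!mulmxA.
- apply/tensmx_row_eqP => bv hv; move: (C1 bv hv).
  by rewrite !castmx_idmxr -tensmx_mul -!mulmxA.
- apply/tensmx_row_eqP => bv hv; move: (C2 bv hv).
  by rewrite !castmx_idmxr -tensmx_mul -!mulmxA.
- apply/tensmx_row_eqP => bv hv; move: (C3 bv hv).
  by rewrite scale_row_counitr !castmx_idmxr -!mulmxA.
- apply/tensmx_row_eqP => bv hv; move: (C4 bv hv).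
  by rewrite scale_row_counitl !castmx_idmxr -!mulmxA.
Qed.

Theorem proposition4p4 (K : fieldType) (b h : nat)
    (aB : 'M[K]_b) (DB : 'M[K]_(b, b * b)) (EB : 'M[K]_(b, 1))
    (aH : 'M[K]_h) (DH : 'M[K]_(h, h * h)) (EH : 'M[K]_(h, 1))
    (Phi : 'M[K]_(b * h, h * b)) (n : int) :
  [pchar K] =i pred0 ->
  hom_coalgebra aB DB EB ->
  hom_coalgebra aH DH EH ->
  (aB *t aH) *m Phi = Phi *m (aH *t aB) ->
  (comonad_distr_law aH DH EH aB DB EB (ddot_phi aB aH Phi n) <->
   [/\ (* (M1) *)
       forall (bv : 'rV[K]_b) (hv : 'rV[K]_h),
         castmx (erefl _, mulnA b h b)
           (castmx (erefl _, esym (mulnA b b h)) ((bv *m DB) *t (hv *m aH))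
              *m ((1%:M : 'M[K]_b) *t Phi))
           *m (Phi *t (1%:M : 'M[K]_b))
         = castmx (erefl _, mulnA h b b) ((bv *t hv) *m Phi *m (aH *t DB)),
       (* (M2) *)
       forall (bv : 'rV[K]_b) (hv : 'rV[K]_h),
         castmx (erefl _, mulnA h h b)
           (castmx (erefl _, esym (mulnA h b h))
              (castmx (erefl _, mulnA b h h) ((bv *m aB) *t (hv *m DH))
                 *m (Phi *t (1%:M : 'M[K]_h)))
            *m ((1%:M : 'M[K]_h) *t Phi))
         = (bv *t hv) *m Phi *m (DH *t aB),
       (* (M3) *)
       forall (bv : 'rV[K]_b) (hv : 'rV[K]_h),
         castmx (erefl _, mul1n b) ((bv *t hv) *m Phi *m (EH *t (1%:M : 'M[K]_b)))
         = (hv *m EH) 0 0 *: bv &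
       (* (M4) *)
       forall (bv : 'rV[K]_b) (hv : 'rV[K]_h),
         castmx (erefl _, muln1 h) ((bv *t hv) *m Phi *m ((1%:M : 'M[K]_h) *t EB))
         = (bv *m EB) 0 0 *: hv]).
Proof.
move=> _ [uB [hDB hEB] _ _ _] [uH [hDH hEH] _ _ _] hPhi.
have [PQ QP] := mxpowz_twist uB n.
have gP := coalg_aut_mxpowz uB hDB hEB (- n - 1).
have gQ := coalg_aut_mxpowz uB hDB hEB n.
apply: iff_trans (tensored_distr_lawP DB EB DH EH uB uH (twist_morph hPhi gP gQ)) _.
apply: iff_trans (twist_distr_law_at_unitP uB uH hDB hEB hDH hEH hPhi gP gQ PQ QP) _.
exact: hom_coalg_distr_law_rowP.
Qed.
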